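(* Let $\rho:\mathcal{X}\to\mathbb{R}$ be a monetary risk measure and let $P\in\mathcal{M}_1$. Then $\rho^P$ is a monetary risk measure on $L^\infty(P)$, where its defining properties are understood $P$-almost surely: (i) if $X\ge 0$ $P$-a.s. then $\rho^P(X)\le 0$; (ii) if $X\ge Y$ $P$-a.s. then $\rho^P(X)\le\rho^P(Y)$; (iii) $\rho^P(X+a)=\rho^P(X)-a$ for all $a\in\mathbb{R}$, for all $X,Y\in L^\infty(P)$. If moreover $\rho$ is a convex risk measure, then $\rho^P$ is convex, i.e. $\rho^P(\lambda X+(1-\lambda)Y)\le\lambda\rho^P(X)+(1-\lambda)\rho^P(Y)$ for all $X,Y\in L^\infty(P)$ and $\lambda\in(0,1)$.
   Context: $(\Omega,\mathcal{F})$ is a measurable space, $\mathcal{M}_1$ the set of probability measures on it, and $\mathcal{X}$ the space of all $\mathcal{F}$-measurable $X:\Omega\to\mathbb{R}$ with $\sup_{\omega}|X(\omega)|<\infty$. A monetary risk measure is a map $\rho:\mathcal{X}\to\mathbb{R}$ such that, pointwise for all $\omega$: $X\ge0\Rightarrow\rho(X)\le0$; $X\ge Y\Rightarrow\rho(X)\le\rho(Y)$; $\rho(X+a)=\rho(X)-a$ for all $a\in\mathbb{R}$. It is a convex risk measure if in addition $\rho(\lambda X+(1-\lambda)Y)\le\lambda\rho(X)+(1-\lambda)\rho(Y)$ for all $X,Y\in\mathcal{X}$, $\lambda\in(0,1)$. For $P\in\mathcal{M}_1$ and $X\in L^\infty(P)=L^\infty(\Omega,\mathcal{F},P)$ define $\rho^P(X)=\inf\{\rho(\widetilde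 X):\widetilde X\in\mathcal{X},\ P(\widetilde X=X)=1\}$. *)

From HB Require Import structures.
From mathcomp Require Import all_boot all_order all_algebra.
From mathcomp Require Import all_classical all_reals all_analysis.
Set Implicit Arguments. Unset Strict Implicit. Unset Printing Implicit Defensive.
Import Order.TTheory GRing.Theory Num.Theory.
Local Open Scope classical_set_scope.
Local Open Scope ring_scope.

Section RiskDefs.
Context {d : measure_display} {T : measurableType d} {R : realType}.

Definition bdd_meas (X : T -> R) : Prop :=
  measurable_fun setT X /\ exists M : R, forall w, `|X w| <= M.

Definition Linf (P : probability T R) (X : T -> R) : Prop :=
  measurable_fun setT X /\ exists M : R, {ae P, forall w, `|X w| <= M}.

Definition monetary (rho : (T -> R) -> R) : Prop :=
  (forall X, bdd_meas X -> (forall w, 0 <= X w) -> rho X <= 0) /\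
  (forall X Y, bdd_meas X -> bdd_meas Y -> (forall w, Y w <= X w) ->
     rho X <= rho Y) /\
  (forall X (a : R), bdd_meas X -> rho (fun w => X w + a) = rho X - a).

Definition convex_rm (rho : (T -> R) -> R) : Prop :=
  forall X Y (l : R), bdd_meas X -> bdd_meas Y -> 0 < l < 1 ->
    rho (fun w => l * X w + (1 - l) * Y w) <= l * rho X + (1 - l) * rho Y.

Definition rhoP (rho : (T -> R) -> R) (P : probability T R) (X : T -> R)
  : \bar R :=
  ereal_inf [set (rho Xt)%:E | Xt in
     [set Xt | bdd_meas Xt /\ P [set w | Xt w = X w] = 1%E]].

End RiskDefs.

From HB Require Import structures.
From mathcomp Require Import all_boot all_order all_algebra.
From mathcomp Require Import all_classical all_reals all_analysis.
From mathcomp Require Import measurable_realfun.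
Import Order.TTheory GRing.Theory Num.Theory.
Local Open Scope classical_set_scope.
Local Open Scope ring_scope.

(* Truncating an essentially bounded X at its essential bound gives a bounded
   version of X, so rho^P(X) is an infimum over a nonempty set and is < +oo.
   A.s. relations between the arguments become pointwise ones after changing
   versions on a null set: if X >= Y a.s. and Xt, Yt are versions of X, Y,
   then max(Xt, Yt) is a version of X dominating Yt everywhere; Xt + a is a
   version of X + a; and l Xt + (1 - l) Yt is a version of l X + (1 - l) Y.
   Taking infima over versions, in the extended reals where rho^P may be -oo,
   gives the three properties and convexity. *)

Lemma ereal_inf_addr_ge (R : realType) (u c : \bar R) (S : set (\bar R)) :
  S !=set0 -> (c < +oo)%E -> (forall y, S y -> u <= y + c)%E ->
  (u <= ereal_inf S + c)%E.
Proof.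
move=> [y0 Sy0]; case: c => [c | // | ] _ uS.
  rewrite -leeBlDr //; apply/ereal_infP => y Sy.
  by rewrite leeBlDr //; exact: uS.
by rewrite addeNy; have := uS _ Sy0; rewrite addeNy.
Qed.

Section bounded_measurable.
Context {d : measure_display} {T : measurableType d} {R : realType}.
Implicit Types f g : T -> R.

Lemma bdd_meas_cst (a : R) : bdd_meas (fun _ : T => a).
Proof. by split; [exact: measurable_cst | exists `|a|]. Qed.

Lemma bdd_measD {f g} : bdd_meas f -> bdd_meas g -> bdd_meas (f \+ g).
Proof.
move=> [mf [M1 fM1]] [mg [M2 gM2]]; split; first exact: measurable_funD.
by exists (M1 + M2) => w; apply: le_trans (ler_normD _ _) (lerD _ _).
Qed.

Lemma bdd_measZ (a : R) {f} : bdd_meas f -> bdd_meas (fun w => a * f w).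
Proof.
move=> [mf [M fM]]; split; first exact: measurable_funM.
by exists (`|a| * M) => w; rewrite normrM ler_wpM2l.
Qed.

Lemma bdd_meas_max {f g} : bdd_meas f -> bdd_meas g -> bdd_meas (f \max g).
Proof.
move=> [mf [M1 fM1]] [mg [M2 gM2]]; split; first exact: measurable_maxr.
exists (Num.max M1 M2) => w /=.
by case: (leP (f w) (g w)) => _; rewrite le_max ?fM1 ?gM2 ?orbT.
Qed.

End bounded_measurable.

Section versions.
Context {d : measure_display} {T : measurableType d} {R : realType}.
Variable P : probability T R.
Implicit Types X Xt : T -> R.

Definition bdd_version X Xt := bdd_meas Xt /\ {ae P, forall w, Xt w = X w}.

Lemma probability_eq1_ae {A : set T} : measurable A ->
  P A = 1%E <-> {ae P, forall w, A w}.
Proof.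
move=> mA; change (P A = 1%E <-> P.-negligible (~` A)).
rewrite negligibleP; last exact: measurableC.
change (P A = 1%E <-> P (~` A) = 0%E); rewrite probability_setC //.
split => [-> | ]; first by rewrite subee.
move: (probability_le1 P mA) (measure_ge0 P A); case: (P A) => [r | | ] //= _ _.
by rewrite -EFinB => -[/eqP]; rewrite subr_eq0 => /eqP <-.
Qed.

Lemma measurable_eq_fun {X Xt} :
  measurable_fun setT X -> measurable_fun setT Xt ->
  measurable [set w | Xt w = X w].
Proof.
move=> mX mXt.
have -> : [set w | Xt w = X w] = setT `&` (Xt \- X) @^-1` [set 0].
  apply/seteqP; split => w /=; first by move=> ->; rewrite subrr.
  by move=> [_ /subr0_eq].
exact: (measurable_funB mXt mX) measurableT _ (measurable_set1 0).
Qed.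

Lemma rhoPE rho {X} : measurable_fun setT X ->
  rhoP rho P X = ereal_inf [set (rho Xt)%:E | Xt in bdd_version X].
Proof.
move=> mX; congr (ereal_inf (image _ _)); apply/seteqP; split => Xt [bXt XtX].
  by split => //; apply: (probability_eq1_ae (measurable_eq_fun mX bXt.1)).1.
by split => //; apply: (probability_eq1_ae (measurable_eq_fun mX bXt.1)).2.
Qed.

Lemma Linf_bdd_version {X} : Linf P X -> exists Xt, bdd_version X Xt.
Proof.
move=> [mX [M XM]]; exists (fun w => Num.max (- M) (Num.min M (X w))); split.
  split; first by apply: measurable_maxr => //; exact: measurable_minr.
  exists `|M| => w; rewrite ler_norml le_max ge_max ge_min lerN2 ler_norm /=.
  by rewrite -normrN ler_norm.
apply: filterS XM => w; rewrite ler_norml => /andP[Xlo Xhi].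
by rewrite min_r // max_r.
Qed.

End versions.

Section risk_measure_on_Linf.
Context {d : measure_display} {T : measurableType d} {R : realType}.
Variables (rho : (T -> R) -> R) (P : probability T R).
Implicit Types X Y Xt Yt : T -> R.

Lemma rhoP_le_version {X Xt} : measurable_fun setT X -> bdd_version P X Xt ->
  (rhoP rho P X <= (rho Xt)%:E)%E.
Proof.
by move=> mX vXt; rewrite (rhoPE _ _ mX); apply: ereal_inf_lbound; exists Xt.
Qed.

Lemma rhoP_ltry {X} : Linf P X -> (rhoP rho P X < +oo)%E.
Proof.
move=> LX; have [Xt vXt] := Linf_bdd_version P LX.
exact: le_lt_trans (rhoP_le_version LX.1 vXt) (ltry _).
Qed.

Hypothesis rho_mono : forall X Y, bdd_meas X -> bdd_meas Y ->
  (forall w, Y w <= X w) -> rho X <= rho Y.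

Lemma rhoP_le {X Y} : Linf P X -> measurable_fun setT Y ->
  {ae P, forall w, Y w <= X w} -> (rhoP rho P X <= rhoP rho P Y)%E.
Proof.
move=> LX mY YX; have [Xt [bXt XtX]] := Linf_bdd_version P LX.
rewrite (rhoPE _ _ mY); apply/ereal_infP => _ [Yt [bYt YtY] <-].
have maxE : {ae P, forall w, Num.max (Xt w) (Yt w) = X w}.
  by apply: filterS3 XtX YtY YX => w -> -> YXw; rewrite max_l.
apply: le_trans (rhoP_le_version LX.1 (conj (bdd_meas_max bXt bYt) maxE)) _.
rewrite lee_fin rho_mono //; first exact: bdd_meas_max.
by move=> w; rewrite le_max lexx orbT.
Qed.

Hypothesis rho_le0 :
  forall X, bdd_meas X -> (forall w, 0 <= X w) -> rho X <= 0.

Lemma rhoP_le0 {X} :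
  Linf P X -> {ae P, forall w, 0 <= X w} -> (rhoP rho P X <= 0)%E.
Proof.
move=> LX X0; have mO : measurable_fun setT (fun _ : T => 0 : R).
  exact: measurable_cst.
have vO : bdd_version P (fun _ => 0) (fun _ => 0).
  by split; [exact: bdd_meas_cst | exact: aeW].
apply: le_trans (rhoP_le LX mO X0) _.
apply: le_trans (rhoP_le_version mO vO) _.
by rewrite lee_fin rho_le0 //; exact: bdd_meas_cst.
Qed.

Hypothesis rho_cash :
  forall X (a : R), bdd_meas X -> rho (fun w => X w + a) = rho X - a.

Lemma rhoP_translate_le {X} (a : R) : measurable_fun setT X ->
  (rhoP rho P (fun w => (X w + a)%R) <= rhoP rho P X - a%:E)%E.
Proof.
move=> mX; rewrite leeBrDr // (rhoPE _ _ mX).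
apply/ereal_infP => _ [Xt [bXt XtX] <-].
rewrite -leeBrDr // -EFinB -rho_cash //.
apply: rhoP_le_version; first exact: measurable_funD mX (measurable_cst a).
split; first exact: bdd_measD bXt (bdd_meas_cst a).
by apply: filterS XtX => w ->.
Qed.

Lemma rhoP_translate {X} (a : R) : measurable_fun setT X ->
  rhoP rho P (fun w => X w + a) = (rhoP rho P X - a%:E)%E.
Proof.
move=> mX; apply/le_anti; rewrite rhoP_translate_le // andTb leeBlDr //.
have := rhoP_translate_le (- a) (measurable_funD mX (measurable_cst a)).
by under eq_fun do rewrite addrK; rewrite EFinN oppeK.
Qed.

Hypothesis rho_convex : convex_rm rho.

Lemma rhoP_convex {X Y} (l : R) : Linf P X -> Linf P Y -> 0 < l < 1 ->
  (rhoP rho P (fun w => (l * X w + (1 - l) * Y w)%R)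
     <= l%:E * rhoP rho P X + (1 - l)%:E * rhoP rho P Y)%E.
Proof.
move=> LX LY /andP[l0 l1]; have l'0 : 0 < 1 - l by rewrite subr_gt0.
set Z := fun w => l * X w + (1 - l) * Y w.
have mZ : measurable_fun setT Z.
  apply: measurable_funD; apply: measurable_funM => //.
  - exact: LX.1.
  - exact: LY.1.
have rhoP_Z_le Xt Yt : bdd_version P X Xt -> bdd_version P Y Yt ->
    (rhoP rho P Z <= l%:E * (rho Xt)%:E + (1 - l)%:E * (rho Yt)%:E)%E.
  move=> [bXt XtX] [bYt YtY].
  have vZ : bdd_version P Z (fun w => l * Xt w + (1 - l) * Yt w).
    split; first by apply: bdd_measD; exact: bdd_measZ.
    by apply: filterS2 XtX YtY => w -> ->.
  apply: le_trans (rhoP_le_version mZ vZ) _.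
  by rewrite -!EFinM -EFinD lee_fin rho_convex // l0 l1.
have [Xt0 vXt0] := Linf_bdd_version P LX.
have [Yt0 vYt0] := Linf_bdd_version P LY.
rewrite addeC (rhoPE _ _ LY.1) -(ereal_inf_pZl _ l'0).
apply: ereal_inf_addr_ge.
- by exists ((1 - l)%:E * (rho Yt0)%:E)%E, (rho Yt0)%:E => //; exists Yt0.
- by apply: lte_mul_pinfty; rewrite ?lee_fin ?ltW //; exact: rhoP_ltry.
move=> _ [_ [Yt vYt <-] <-].
rewrite addeC (rhoPE _ _ LX.1) -(ereal_inf_pZl _ l0).
apply: ereal_inf_addr_ge.
- by exists (l%:E * (rho Xt0)%:E)%E, (rho Xt0)%:E => //; exists Xt0.
- by rewrite -EFinM ltry.
by move=> _ [_ [Xt vXt <-] <-]; exact: rhoP_Z_le.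
Qed.

End risk_measure_on_Linf.

Theorem lemma3p3 (d : measure_display) (T : measurableType d) (R : realType)
  (rho : (T -> R) -> R) (P : probability T R) :
  monetary rho ->
  (forall X : T -> R, Linf P X -> {ae P, forall w, 0 <= X w} ->
     (rhoP rho P X <= 0)%E) /\
  (forall X Y : T -> R, Linf P X -> Linf P Y -> {ae P, forall w, Y w <= X w} ->
     (rhoP rho P X <= rhoP rho P Y)%E) /\
  (forall (X : T -> R) (a : R), Linf P X ->
     rhoP rho P (fun w => X w + a) = (rhoP rho P X - a%:E)%E) /\
  (convex_rm rho ->
   forall (X Y : T -> R) (l : R), Linf P X -> Linf P Y -> 0 < l < 1 ->
     (rhoP rho P (fun w => (l * X w + (1 - l) * Y w)%R)
        <= l%:E * rhoP rho P X + (1 - l)%:E * rhoP rho P Y)%E).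
Proof.
move=> [rho_le0 [rho_mono rho_cash]]; split; [|split; [|split]].
- by move=> X LX; exact: rhoP_le0.
- by move=> X Y LX LY; exact: rhoP_le LX LY.1.
- by move=> X a LX; exact: rhoP_translate LX.1.
- by move=> rho_convex X Y l; exact: rhoP_convex.
Qed.
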